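(* Let $\mathcal{F}=(f_s:I_s\to[n]\mid s\in S)$ be an $S$-claw in $\Delta$. If $\mathcal{F}$ is compatible and either left active or right active, then $\mathcal{F}$ is cyclically compatible. Moreover, the following are equivalent: (1) $\mathcal{F}$ is cyclically compatible; (2) for every $m\in[n]$ the cyclic rotation $\mathcal{F}^{+m}$ is compatible; (3) there is $m\in[n]$ such that $\mathcal{F}^{+m}$ is left active and compatible; (4) there is $m\in[n]$ such that $\mathcal{F}^{+m}$ is right active and compatible.
   Context: $\Delta$: simplex category of $[n]=\{0<\dots<n\}$, weakly monotone maps. An $S$-claw on $[n]$ is a family $f_s:I_s\to[n]$; it is left (right) active if each $f_s$ preserves minima (maxima). Compatible: (BC1) for each $i\in[n]$ at most one $s$ has $f_s^{-1}\{i\}$ not a singleton; (BC2) for each $0<i\le n$ at most one $s$ has $\{i-1,i\}\not\subseteq f_s(I_s)$. Cyclically compatible: compatible and all but at most one $s$ satisfy $\{0,n\}\subseteq f_s(I_s)$. Cyclic rotation: for $m\in[n]$, let $[n]^{+m}$ be the set $\{0,\dots,n\}$ with the order $n-m+1\prec\dots\prec n\prec0\prec\dots\prec n-m$, and $I_s^{+m}$ the set $I_s$ with the order in which the elements of $f_s^{-1}\{n-m+1,\dots,n\}$ (in their original order) precede those of $f_s^{-1}\{0,\dots,n-m\}$ (in their original order); then $f_s^{+m}:I_s^{+m}\to[n]^{+m}$ (same underlying map) is order preserving, and $\mathcal{F}^{+m}=(f_s^{+m})_{s\in S}$, regarded as a claw in $\Delta$ via the unique order isomorphisms with standard ordinals.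 (This is the rotation induced by the cyclic category $\Lambda$, where $\Delta\cong\Lambda_{/\langle0\rangle}$.) *)

From mathcomp Require Import all_boot all_order all_algebra.
Set Implicit Arguments. Unset Strict Implicit. Unset Printing Implicit Defensive.

(* An S-claw in Delta on [n] = 'I_n.+1 is given by k : S -> nat and
   f s : 'I_(k s).+1 -> 'I_n.+1 (weakly monotone), i.e. f_s : [k_s] -> [n]. *)

Definition weakly_monotone (k n : nat) (g : 'I_k.+1 -> 'I_n.+1) : Prop :=
  forall i j : 'I_k.+1, (i <= j)%N -> (g i <= g j)%N.

Definition is_claw (S : Type) (n : nat) (k : S -> nat)
  (f : forall s, 'I_(k s).+1 -> 'I_n.+1) : Prop :=
  forall s, weakly_monotone (f s).

Definition at_most_one (S : Type) (P : S -> Prop) : Prop :=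
  forall s t, P s -> P t -> s = t.

Definition in_image (k n : nat) (g : 'I_k.+1 -> 'I_n.+1) (i : nat) : Prop :=
  exists j, (g j : nat) = i.

Definition left_active (S : Type) (n : nat) (k : S -> nat)
  (f : forall s, 'I_(k s).+1 -> 'I_n.+1) : Prop :=
  forall s, (f s ord0 : nat) = 0%N.

Definition right_active (S : Type) (n : nat) (k : S -> nat)
  (f : forall s, 'I_(k s).+1 -> 'I_n.+1) : Prop :=
  forall s, (f s ord_max : nat) = n.

Definition compatible (S : Type) (n : nat) (k : S -> nat)
  (f : forall s, 'I_(k s).+1 -> 'I_n.+1) : Prop :=
  (forall i : 'I_n.+1,
     at_most_one (fun s => #|[pred j | f s j == i]| <> 1%N))
  /\
  (forall i : nat, (0 < i <= n)%N ->
     at_most_one (fun s => ~ (in_image (f s) i.-1 /\ in_image (f s) i))).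

Definition cyclically_compatible (S : Type) (n : nat) (k : S -> nat)
  (f : forall s, 'I_(k s).+1 -> 'I_n.+1) : Prop :=
  compatible f /\
  at_most_one (fun s => ~ (in_image (f s) 0 /\ in_image (f s) n)).

(* Cyclic rotation F^{+m}, transported to standard ordinals through the
   unique order isomorphisms.  With a_s = #|f_s^{-1}{0,...,n-m}|, the
   rotated order on I_s = [k_s] has rank j |-> (j - a_s) mod (k_s+1), and the
   rotated order on [n] has rank x |-> (x + m) mod (n+1). *)
Definition rot_offset (k n : nat) (g : 'I_k.+1 -> 'I_n.+1) (m : 'I_n.+1) : nat :=
  #|[pred j | (g j <= n - m)%N]|.

Definition rotate (S : Type) (n : nat) (k : S -> nat)
  (f : forall s, 'I_(k s).+1 -> 'I_n.+1) (m : 'I_n.+1) :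
  forall s, 'I_(k s).+1 -> 'I_n.+1 :=
  fun s p => inZp (f s (inZp (p + rot_offset (f s) m)) + m).

From mathcomp Require Import all_boot all_order all_algebra zify.
From Stdlib Require Import Classical.
Import GRing.Theory.

(* Read [n] cyclically as 'I_n.+1 and call {i - 1, i} the edge i, so that edge
   0 is {n, 0}.  Compatibility is (BC1) plus "at most one f_s misses edge i"
   for all i <> 0; cyclic compatibility asks it for every i.  Rotating by m
   adds m to every value, so F^{+m} is compatible iff F has (BC1) and the
   edge condition away from edge -m.  When every f_s hits -m (F^{+m}
   left active), an f_s missing edge -m also misses edge -m - 1, so the
   condition at -m follows from its neighbour; symmetrically when every f_s
   hits -m - 1 (right active).  Conversely (BC2) forces a value v hit by every
   f_s (otherwise one f_s missing 0 would be forced to miss 1, ..., n), and by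
   monotonicity the rotation starting at v is left active and the one ending
   at v right active. *)

Lemma card_ord_lt {K t} : t <= K -> #|[pred i : 'I_K | i < t]| = t.
Proof.
move=> le_tK; rewrite cardE /enum_mem size_filter -enumT.
rewrite -(count_map val (fun x => x < t)) val_enum_ord -size_filter.
by rewrite -{1}(add0n t) filter_iota_ltn // size_iota.
Qed.

Section MonotoneCounts.
Context {K N : nat} {g : 'I_K.+1 -> 'I_N.+1}.
Hypothesis g_mono : weakly_monotone g.

Lemma mono_ltE w j : (g j < w) = (j < #|[pred i | g i < w]|).
Proof.
case: (ltnP (g j) w) => [lt_gj_w | le_w_gj]; apply/esym.
- rewrite -(card_ord_lt (ltn_ord j)); apply/subset_leq_card/subsetP => i.
  by rewrite !inE ltnS => le_ij; apply: leq_ltn_trans (g_mono _ _ le_ij) lt_gj_w.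
- apply/negbTE; rewrite -leqNgt -[X in _ <= X](card_ord_lt (ltnW (ltn_ord j))).
  apply/subset_leq_card/subsetP => i; rewrite !inE !ltnNge; apply: contraNN.
  by move/g_mono/(leq_trans le_w_gj).
Qed.

Lemma value_at_count_lt v :
  in_image g v -> g (inZp #|[pred i | g i < v]|) = v :> nat.
Proof.
case=> j0 gj0; set c := #|_|.
have le_c_j0 : c <= j0 by rewrite leqNgt -mono_ltE gj0 ltnn.
have c_val : (inZp c : 'I_K.+1) = c :> nat.
  by rewrite /= modn_small // (leq_ltn_trans le_c_j0).
apply/eqP; rewrite eqn_leq; apply/andP; split.
- by rewrite -gj0 g_mono ?c_val.
- by rewrite leqNgt mono_ltE c_val ltnn.
Qed.

Lemma value_at_count_le_pred v :
  in_image g v -> g (inZp #|[pred i | g i <= v]|.-1) = v :> nat.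
Proof.
case=> j0 gj0.
have -> : #|[pred i | g i <= v]| = #|[pred i | g i < v.+1]| by apply: eq_card.
set c := #|_|.
have lt_j0_c : j0 < c by rewrite -mono_ltE gj0.
have c_le : c <= K.+1 by rewrite -[K.+1]card_ord max_card.
have c_val : (inZp c.-1 : 'I_K.+1) = c.-1 :> nat by rewrite /= modn_small //; lia.
apply/eqP; rewrite eqn_leq; apply/andP; split.
- by rewrite -ltnS mono_ltE c_val -/c; lia.
- by rewrite -gj0 g_mono ?c_val; lia.
Qed.

End MonotoneCounts.

Local Open Scope ring_scope.

Lemma sub_at_most_one {S : Type} {P Q : S -> Prop} :
  (forall s, Q s -> P s) -> at_most_one P -> at_most_one Q.
Proof. by move=> QP amoP s t /QP Ps /QP Pt; apply: amoP. Qed.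

Lemma in_imageE {k n} (g : 'I_k.+1 -> 'I_n.+1) (y : 'I_n.+1) :
  in_image g y <-> exists j, g j = y.
Proof. by split=> -[j gj]; exists j; [apply: val_inj | rewrite gj]. Qed.

Definition bc1 {S : Type} {n} {k : S -> nat}
    (f : forall s, 'I_(k s).+1 -> 'I_n.+1) :=
  forall i : 'I_n.+1, at_most_one (fun s => #|[pred j | f s j == i]| <> 1%N).

Definition misses_edge {k n} (g : 'I_k.+1 -> 'I_n.+1) (i : 'I_n.+1) :=
  ~ (in_image g (i - Zp1)%R /\ in_image g i).

Definition bc2_at {S : Type} {n} {k : S -> nat}
    (f : forall s, 'I_(k s).+1 -> 'I_n.+1) (i : 'I_n.+1) :=
  at_most_one (fun s => misses_edge (f s) i).

Lemma val_subZp1 {n} (i : 'I_n.+1) : i != 0 -> (i - Zp1 : 'I_n.+1) = i.-1 :> nat.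
Proof.
rewrite -val_eqE /= => i_gt0; have := ltn_ord i.
case: n i i_gt0 => [|n] i i_gt0 lt_i; first by lia.
rewrite (modn_small (_ : 1 < n.+2)%N) // (modn_small (_ : n.+2 - 1 < n.+2)%N) //.
have -> : (i + (n.+2 - 1) = i.-1 + n.+2)%N by lia.
by rewrite modnDr modn_small //; lia.
Qed.

Lemma ord_maxE n : ord_max = - Zp1 :> 'I_n.+1.
Proof.
apply: val_inj => /=; case: n => [|n] //.
by rewrite (modn_small (_ : 1 < n.+2)%N) // subn1 modn_small.
Qed.

Lemma Zp1_neq0 n : (0 < n)%N -> Zp1 != 0 :> 'I_n.+1.
Proof. by case: n => // n _; apply: Zp_nontrivial. Qed.

Lemma val_ord_max_sub {n} (v : 'I_n.+1) : (ord_max - v : 'I_n.+1) = (n - v)%N :> nat.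
Proof.
rewrite /=; have := ltn_ord v; case: (posnP v) => [-> _|v_gt0 lt_v].
  by rewrite !subn0 modnn addn0 modn_small.
have -> : (n + (n.+1 - v) %% n.+1 = n - v + n.+1)%N by rewrite modn_small; lia.
by rewrite modnDr modn_small //; lia.
Qed.

Lemma ord_max_add_inZp {K c} : (0 < c)%N -> (ord_max + inZp c : 'I_K.+1) = inZp c.-1.
Proof.
move=> c_gt0; apply: val_inj => /=; rewrite modnDmr.
have -> : (K + c = c.-1 + K.+1)%N by lia.
by rewrite modnDr.
Qed.

Section RotOffset.
Context {K n : nat} (g : 'I_K.+1 -> 'I_n.+1).

Lemma rot_offset_opp v :
  (inZp (rot_offset g (- v)) : 'I_K.+1) = inZp #|[pred j | (g j < v)%N]|.
Proof.
rewrite /rot_offset; case: (posnP v) => [v0|v_gt0].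
- have -> : v = 0 by apply: val_inj.
  have -> : #|[pred j | (g j < 0)%N]| = 0%N by apply: eq_card0 => j; rewrite !inE.
  rewrite oppr0 subn0.
  have -> : #|[pred j | (g j <= n)%N]| = K.+1.
    by rewrite -[RHS]card_ord; apply: eq_card => j; rewrite !inE -ltnS ltn_ord.
  by apply: val_inj; rewrite /= modnn mod0n.
- have lt_v := ltn_ord v.
  congr inZp; apply: eq_card => j; rewrite !inE /= modn_small; last lia.
  by apply/idP/idP; lia.
Qed.

Lemma rot_offset_ord_max_sub v :
  rot_offset g (ord_max - v) = #|[pred j | (g j <= v)%N]|.
Proof. by rewrite /rot_offset val_ord_max_sub subKn // -ltnS. Qed.

End RotOffset.

Section Compatibility.
Context {S : Type} {n : nat} {k : S -> nat} {f : forall s, 'I_(k s).+1 -> 'I_n.+1}.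

Lemma compatibleE :
  compatible f <-> bc1 f /\ forall i : 'I_n.+1, i != 0 -> bc2_at f i.
Proof.
split=> -[bc1f bc2f]; split=> // i.
- move=> i_neq0; have i_gt0 : (0 < i)%N by rewrite lt0n.
  apply: sub_at_most_one (bc2f i _) => [s|]; last by rewrite i_gt0 -ltnS ltn_ord.
  by rewrite /misses_edge val_subZp1.
- move=> /andP [i_gt0 le_in]; have i_val : @inord n i = i :> nat by rewrite inordK.
  apply: sub_at_most_one (bc2f (inord i) _) => [s|].
    by rewrite /misses_edge val_subZp1 ?i_val // -val_eqE /= i_val -lt0n.
  by rewrite -val_eqE /= i_val -lt0n.
Qed.

Lemma cyclically_compatibleE :
  cyclically_compatible f <-> bc1 f /\ forall i, bc2_at f i.
Proof.
have misses_edge0 s : misses_edge (f s) 0 <-> ~ (in_image (f s) 0 /\ in_image (f s) n).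
  by rewrite /misses_edge sub0r -ord_maxE and_comm.
rewrite /cyclically_compatible compatibleE; split.
- move=> [[bc1f bc2f] bc2f0]; split=> // i.
  have [->|] := eqVneq i 0; last exact: bc2f.
  by apply: sub_at_most_one bc2f0 => s /misses_edge0.
- move=> [bc1f bc2f]; split; first by split=> // i _; apply: bc2f.
  by apply: sub_at_most_one (bc2f 0) => s /misses_edge0.
Qed.

Lemma bc2_at_n0 i : n = 0%N -> bc2_at f i.
Proof.
move=> n0 s t miss_s; exfalso; apply: miss_s.
have val0 (x : 'I_n.+1) : x = 0%N :> nat by have := ltn_ord x; lia.
by split; exists ord0; rewrite !val0.
Qed.

Lemma bc2_at_head_covered (c : 'I_n.+1) :
  (forall s, in_image (f s) c) -> bc2_at f (c - Zp1) -> bc2_at f c.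
Proof. by move=> cov; apply: sub_at_most_one => s miss [_ prev]; apply: miss. Qed.

Lemma bc2_at_tail_covered (c : 'I_n.+1) :
  (forall s, in_image (f s) (c - Zp1)%R) -> bc2_at f (c + Zp1) -> bc2_at f c.
Proof.
move=> cov; apply: sub_at_most_one => s miss [cur _]; apply: miss.
by move: cur; rewrite addrK.
Qed.

Lemma bc2_at_all_of_head_covered (c : 'I_n.+1) :
  (forall s, in_image (f s) c) -> (forall i, i != c -> bc2_at f i) ->
  forall i, bc2_at f i.
Proof.
move=> cov bc2f i; have [->{i}|] := eqVneq i c; last exact: bc2f.
have [n0|n_gt0] := posnP n; first exact: bc2_at_n0.
apply: bc2_at_head_covered cov (bc2f _ _).
by rewrite -subr_eq0 addrAC subrr sub0r oppr_eq0 Zp1_neq0.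
Qed.

Lemma bc2_at_all_of_tail_covered (c : 'I_n.+1) :
  (forall s, in_image (f s) (c - Zp1)%R) -> (forall i, i != c -> bc2_at f i) ->
  forall i, bc2_at f i.
Proof.
move=> cov bc2f i; have [->{i}|] := eqVneq i c; last exact: bc2f.
have [n0|n_gt0] := posnP n; first exact: bc2_at_n0.
apply: bc2_at_tail_covered cov (bc2f _ _).
by rewrite -subr_eq0 addrAC subrr add0r Zp1_neq0.
Qed.

Lemma common_value_of_bc2 :
  (forall i : 'I_n.+1, i != 0 -> bc2_at f i) ->
  exists v : 'I_n.+1, forall s, in_image (f s) v.
Proof.
move=> bc2f; apply: NNPP => no_common.
have missed (v : 'I_n.+1) : exists s, ~ in_image (f s) v.
  apply: NNPP => all_cover; apply: no_common; exists v => s.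
  by apply: NNPP => miss; apply: all_cover; exists s.
have [s0 miss0] := missed 0.
suff miss_all x : (x <= n)%N -> ~ in_image (f s0) x.
  by apply: (miss_all (f s0 ord0)); [rewrite -ltnS ltn_ord | exists ord0].
elim: x => [|x IH] le_x; first exact: miss0.
have [t miss_t] := missed (inord x.+1).
have x1_val : @inord n x.+1 = x.+1 :> nat by rewrite inordK.
suff -> : s0 = t by rewrite x1_val in miss_t.
apply: (bc2f (inord x.+1)); first by rewrite -val_eqE /= x1_val.
- rewrite /misses_edge val_subZp1 ?x1_val; last by rewrite -val_eqE /= x1_val.
  by move=> [cov_x _]; apply: (IH (ltnW le_x)).
- by move=> [_].
Qed.

End Compatibility.

Section Rotation.
Context {S : Type} {n : nat} {k : S -> nat} {f : forall s, 'I_(k s).+1 -> 'I_n.+1}.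

Lemma rotateE m s p :
  rotate f m (s:=s) p = f s (p + inZp (rot_offset (f s) m)) + m.
Proof.
have -> : p + inZp (rot_offset (f s) m) = inZp (p + rot_offset (f s) m).
  by apply: val_inj; rewrite /= modnDmr.
by apply: val_inj.
Qed.

Lemma in_image_rotate m s (y : 'I_n.+1) :
  in_image (rotate f m (s:=s)) y <-> in_image (f s) (y - m)%R.
Proof.
rewrite !in_imageE; split=> -[j fj].
- by exists (j + inZp (rot_offset (f s) m)); rewrite -fj rotateE addrK.
- by exists (j - inZp (rot_offset (f s) m)); rewrite rotateE subrK fj subrK.
Qed.

Lemma card_fiber_rotate m s i :
  #|[pred p | rotate f m (s:=s) p == i]| = #|[pred j | f s j == i - m]|.
Proof.
rewrite -[LHS]cardsE -(card_preimset _ (addIr (- inZp (rot_offset (f s) m)))).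
by apply: eq_card => p; rewrite !inE rotateE subrK [RHS]eq_sym subr_eq eq_sym.
Qed.

Lemma bc1_rotate m : bc1 (rotate f m) <-> bc1 f.
Proof.
split=> bc1f i.
- by apply: sub_at_most_one (bc1f (i + m)) => s; rewrite card_fiber_rotate addrK.
- by apply: sub_at_most_one (bc1f (i - m)) => s; rewrite card_fiber_rotate.
Qed.

Lemma misses_edge_rotate m s i :
  misses_edge (rotate f m (s:=s)) i <-> misses_edge (f s) (i - m).
Proof. by rewrite /misses_edge !in_image_rotate addrAC. Qed.

Lemma bc2_at_rotate m i : bc2_at (rotate f m) i <-> bc2_at f (i - m).
Proof.
by split; apply: sub_at_most_one => s /misses_edge_rotate.
Qed.

Lemma compatible_rotateE m :
  compatible (rotate f m) <-> bc1 f /\ forall i, i != - m -> bc2_at f i.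
Proof.
rewrite compatibleE bc1_rotate; split=> -[bc1f bc2f]; split=> // i.
- by move=> i_neq; rewrite -(addrK m i) -bc2_at_rotate; apply: bc2f; rewrite addr_eq0.
- by move=> i_neq0; rewrite bc2_at_rotate; apply: bc2f; rewrite subr_eq addNr.
Qed.

Lemma cyclically_compatible_rotate m :
  cyclically_compatible f -> compatible (rotate f m).
Proof. by move=> /cyclically_compatibleE [bc1f bc2f]; apply/compatible_rotateE. Qed.

Lemma covered_of_left_active_rotate m :
  left_active (rotate f m) -> forall s, in_image (f s) (- m)%R.
Proof. by move=> la s; rewrite -[- m]sub0r -in_image_rotate; exists ord0; apply: la. Qed.

Lemma covered_of_right_active_rotate m :
  right_active (rotate f m) -> forall s, in_image (f s) (- m - Zp1)%R.
Proof.
move=> ra s; rewrite addrC -ord_maxE -in_image_rotate.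
by exists ord_max; apply: ra.
Qed.

Lemma cyclically_compatible_of_left_active_rotate m :
  left_active (rotate f m) -> compatible (rotate f m) -> cyclically_compatible f.
Proof.
move=> /covered_of_left_active_rotate cov /compatible_rotateE [bc1f bc2f].
by apply/cyclically_compatibleE; split; last exact: bc2_at_all_of_head_covered cov bc2f.
Qed.

Lemma cyclically_compatible_of_right_active_rotate m :
  right_active (rotate f m) -> compatible (rotate f m) -> cyclically_compatible f.
Proof.
move=> /covered_of_right_active_rotate cov /compatible_rotateE [bc1f bc2f].
by apply/cyclically_compatibleE; split; last exact: bc2_at_all_of_tail_covered cov bc2f.
Qed.

Lemma left_active_rotate_opp (v : 'I_n.+1) :
  is_claw f -> (forall s, in_image (f s) v) -> left_active (rotate f (- v)).
Proof.
move=> mono cov s; rewrite rotateE add0r rot_offset_opp.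
by rewrite (val_inj (value_at_count_lt (mono s) _ (cov s))) subrr.
Qed.

Lemma right_active_rotate_ord_max_sub (v : 'I_n.+1) :
  is_claw f -> (forall s, in_image (f s) v) -> right_active (rotate f (ord_max - v)).
Proof.
move=> mono cov s; rewrite rotateE rot_offset_ord_max_sub ord_max_add_inZp.
  by rewrite (val_inj (value_at_count_le_pred (mono s) _ (cov s))) addrC subrK.
by have [j0 fj0] := cov s; apply/card_gt0P; exists j0; rewrite inE fj0.
Qed.

End Rotation.

Theorem lemma4p2p6 (S : Type) (n : nat) (k : S -> nat)
  (f : forall s, 'I_(k s).+1 -> 'I_n.+1) (Hclaw : is_claw f) :
  (compatible f -> left_active f \/ right_active f -> cyclically_compatible f)
  /\
  [<-> cyclically_compatible f;
       forall m : 'I_n.+1, compatible (rotate f m);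
       exists m : 'I_n.+1, left_active (rotate f m) /\ compatible (rotate f m);
       exists m : 'I_n.+1, right_active (rotate f m) /\ compatible (rotate f m)].
Proof.
split.
  move=> /compatibleE [bc1f bc2f] active; apply/cyclically_compatibleE; split=> //.
  case: active => [la | ra].
  - by apply: (bc2_at_all_of_head_covered 0) bc2f => s; exists ord0; apply: la.
  - apply: (bc2_at_all_of_tail_covered 0) bc2f => s.
    by rewrite sub0r -ord_maxE; exists ord_max; apply: ra.
tfae.
- by move=> cyc m; apply: cyclically_compatible_rotate.
- move=> compat_rot.
  have /compatible_rotateE [_] := compat_rot 0.
  rewrite oppr0 => /common_value_of_bc2 [v cov].
  by exists (- v); split; [apply: left_active_rotate_opp | apply: compat_rot].
- move=> [m [la compat]].
  have cyc := cyclically_compatible_of_left_active_rotate _ la compat.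
  have /cyclically_compatibleE [_ bc2f] := cyc.
  have [v cov] := common_value_of_bc2 (fun i _ => bc2f i).
  exists (ord_max - v); split; first exact: right_active_rotate_ord_max_sub.
  exact: cyclically_compatible_rotate.
- move=> [m [ra compat]].
  exact: cyclically_compatible_of_right_active_rotate ra compat.
Qed.
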